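(* Let $X$ be an $M$-thin combinatorial $2$-complex and $\lambda>0$. Let $\mathcal H\le\mathrm{Aut}(X)$, let $Y\subset X$ be an $\mathcal H$-cocompact subcomplex, let $R$ be a $2$-cell of $X$ that is a missing $3$-shell of $Y$ with inner path $S$ and outer path $Q$, and let $Y'=Y\cup\bigcup_{h\in\mathcal H}hR$ be the $(\mathcal H,R)$-enlargement of $Y$. If $|S|<3\lambda|\partial R|$ and $3\lambda M<\frac{1}{|\mathrm{Aut}_{\mathcal H}(R)|}$, then $\mathrm{per}(Y',\mathcal H)<\mathrm{per}(Y,\mathcal H)$.
   Context: $\mathrm{Aut}(X)$ is the group of cellular automorphisms. A side at a $1$-cell $x$ is a pair $(R,r)$ with $R$ a $2$-cell and $r$ a $1$-cell of the boundary cycle $\partial R$ mapping to $x$; $X$ is $M$-thin if each $1$-cell has at most $M$ sides. For a subcomplex $Z$, a side at $x$ lifts to $Z$ if $x\subset Z$ and $(R,r)\to(X,x)$ factors through $Z$; $\mathrm{Missing}_X(Z,x)$ is the set of sides at $x$ not lifting to $Z$. $Z$ is $\mathcal H$-cocompact if $\mathcal H$-invariant with finitely many $\mathcal H$-orbits of cells, and then $\mathrm{per}(Z,\mathcal H)=\sum_i|\mathrm{Missing}_X(Z,z_i)|$ with $z_i$ representatives of the $\mathcal H$-orbits of $1$-cells of $Z$. A piece is a nontrivial path factoring through boundary cycles of two $2$-cells in essentially distinct ways (no compatible homeomorphism of the boundary cycles). A missing $3$-shell of $Y$ is a $2$-cell $R$ of $X$ not contained in $Y$ with $\partial R=QS$,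 where the outer path $Q$ lies in $Y$ and the inner path $S$ is a concatenation of at most $3$ pieces. $\mathrm{Aut}_{\mathcal H}(R)=\mathrm{Stab}_{\mathcal H}(R)/\mathrm{Fix}_{\mathcal H}(R)$, with $\mathrm{Fix}_{\mathcal H}(R)$ the pointwise stabilizer. *)

From Stdlib Require Import Reals List Arith Bool ClassicalEpsilon.
Import ListNotations.
Set Implicit Arguments.

(* A combinatorial 2-complex: vertices, 1-cells (with a reference orientation
   src -> tgt), and 2-cells, each attached along a closed combinatorial path
   [bd R], the image of its boundary cycle: the j-th edge of the cycle C_n
   (from cycle-vertex j to j+1 mod n) is sent to the oriented 1-cell
   [nth j (bd R)] = (e, o), o = true meaning e is traversed src -> tgt. *)
Record complex2 := Complex2 {
  Vx : Type; Ex : Type; Fx : Type;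
  src : Ex -> Vx; tgt : Ex -> Vx;
  bd : Fx -> list (Ex * bool) }.

Unset Strict Implicit.
Section Defs.
Variable X : complex2.

Definition ostart (o : Ex X * bool) : Vx X :=
  if snd o then src X (fst o) else tgt X (fst o).
Definition oend (o : Ex X * bool) : Vx X :=
  if snd o then tgt X (fst o) else src X (fst o).

Definition blen (R : Fx X) : nat := length (bd X R).

Definition is_complex2 : Prop :=
  forall R, bd X R <> [] /\
    forall j o1 o2, nth_error (bd X R) j = Some o1 ->
      nth_error (bd X R) ((S j) mod blen R) = Some o2 -> oend o1 = ostart o2.

(* oriented edges of the cycle graph C_n : (j, b), j < n; b = true means
   traversed from cycle-vertex j to j+1 mod n *)
Definition cstart (n : nat) (c : nat * bool) : nat :=
  if snd c then fst c else (S (fst c)) mod n.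
Definition cend (n : nat) (c : nat * bool) : nat :=
  if snd c then (S (fst c)) mod n else fst c.

Definition img (R : Fx X) (c : nat * bool) : option (Ex X * bool) :=
  option_map (fun o => (fst o, Bool.eqb (snd o) (snd c))) (nth_error (bd X R) (fst c)).

Definition cpath (n : nat) (p : list (nat * bool)) : Prop :=
  p <> [] /\ Forall (fun c => fst c < n) p /\
  forall i c1 c2, nth_error p i = Some c1 -> nth_error p (S i) = Some c2 ->
    cend n c1 = cstart n c2.

(* the cellular automorphisms of C_n: rotation by k (d = true) or the
   reflection sending edge j to edge k - j reversed (d = false) *)
Definition cyc (n k : nat) (d : bool) (c : nat * bool) : nat * bool :=
  if d then ((k + fst c) mod n, snd c) else ((k + (n - fst c)) mod n, negb (snd c)).

Definition is_cyc_iso (n m : nat) (sigma : nat * bool -> nat * bool) : Prop :=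
  n = m /\ exists k d, forall c, fst c < n -> sigma c = cyc n k d c.

(* a piece: a nontrivial path factoring through boundary cycles of two
   2-cells in essentially distinct ways *)
Definition piece (P : list (Ex X * bool)) : Prop :=
  P <> [] /\
  exists R1 R2 p1 p2,
    cpath (blen R1) p1 /\ cpath (blen R2) p2 /\
    map (img R1) p1 = map Some P /\ map (img R2) p2 = map Some P /\
    ~ (exists sigma, is_cyc_iso (blen R1) (blen R2) sigma /\
         (forall c, fst c < blen R1 -> img R2 (sigma c) = img R1 c) /\
         map sigma p1 = p2).

(* raw cellular maps: on vertices, 1-cells (with orientation flag: true =
   orientation preserved), 2-cells, and on each boundary cycle *)
Record amap := AMap {
  mV : Vx X -> Vx X; mE : Ex X -> Ex X; mO : Ex X -> bool;
  mF : Fx X -> Fx X; mB : Fx X -> nat * bool -> nat * bool }.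

Definition oact (g : amap) (o : Ex X * bool) : Ex X * bool :=
  (mE g (fst o), Bool.eqb (mO g (fst o)) (snd o)).

Definition bij {A : Type} (f : A -> A) : Prop :=
  (forall x y, f x = f y -> x = y) /\ (forall y, exists x, f x = y).

Definition is_aut (g : amap) : Prop :=
  bij (mV g) /\ bij (mE g) /\ bij (mF g) /\
  (forall e, (mO g e = true -> src X (mE g e) = mV g (src X e) /\
                               tgt X (mE g e) = mV g (tgt X e)) /\
             (mO g e = false -> src X (mE g e) = mV g (tgt X e) /\
                                tgt X (mE g e) = mV g (src X e))) /\
  (forall R, is_cyc_iso (blen R) (blen (mF g R)) (mB g R) /\
     forall c, fst c < blen R ->
       img (mF g R) (mB g R c) = option_map (oact g) (img R c)).

Definition acomp (g2 g1 : amap) : amap :=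
  AMap (fun v => mV g2 (mV g1 v)) (fun e => mE g2 (mE g1 e))
       (fun e => Bool.eqb (mO g2 (mE g1 e)) (mO g1 e))
       (fun R => mF g2 (mF g1 R)) (fun R c => mB g2 (mF g1 R) (mB g1 R c)).

Definition aid : amap :=
  AMap (fun v => v) (fun e => e) (fun _ => true) (fun R => R) (fun _ c => c).

Definition aeq (g1 g2 : amap) : Prop :=
  (forall v, mV g1 v = mV g2 v) /\ (forall e, mE g1 e = mE g2 e) /\
  (forall e, mO g1 e = mO g2 e) /\ (forall R, mF g1 R = mF g2 R) /\
  (forall R c, fst c < blen R -> mB g1 R c = mB g2 R c).

Definition subgroup (H : amap -> Prop) : Prop :=
  (forall g, H g -> is_aut g) /\
  (exists g, H g /\ aeq g aid) /\
  (forall g1 g2, H g1 -> H g2 -> exists g, H g /\ aeq g (acomp g1 g2)) /\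
  (forall g, H g -> exists g', H g' /\ aeq (acomp g g') aid /\ aeq (acomp g' g) aid).

Record scx := Scx { ZV : Vx X -> Prop; ZE : Ex X -> Prop; ZF : Fx X -> Prop }.

Definition is_subcomplex (Z : scx) : Prop :=
  (forall e, ZE Z e -> ZV Z (src X e) /\ ZV Z (tgt X e)) /\
  (forall R, ZF Z R -> forall j o, nth_error (bd X R) j = Some o -> ZE Z (fst o)).

Definition invariant (H : amap -> Prop) (Z : scx) : Prop :=
  forall g, H g ->
    (forall v, ZV Z v -> ZV Z (mV g v)) /\ (forall e, ZE Z e -> ZE Z (mE g e)) /\
    (forall R, ZF Z R -> ZF Z (mF g R)).

Definition cocompact (H : amap -> Prop) (Z : scx) : Prop :=
  invariant H Z /\
  exists (vs : list (Vx X)) (es : list (Ex X)) (fs : list (Fx X)),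
    (forall v, In v vs -> ZV Z v) /\ (forall e, In e es -> ZE Z e) /\
    (forall R, In R fs -> ZF Z R) /\
    (forall v, ZV Z v -> exists g z, H g /\ In z vs /\ mV g z = v) /\
    (forall e, ZE Z e -> exists g z, H g /\ In z es /\ mE g z = e) /\
    (forall R, ZF Z R -> exists g z, H g /\ In z fs /\ mF g z = R).

(* sides (R, r): r the index of a 1-cell of the boundary cycle of R *)
Definition side_at (x : Ex X) (s : Fx X * nat) : Prop :=
  exists o, nth_error (bd X (fst s)) (snd s) = Some o /\ fst o = x.

Definition thin (M : nat) : Prop :=
  forall x, exists l : list (Fx X * nat),
    NoDup l /\ (forall s, In s l <-> side_at x s) /\ length l <= M.

Definition lifts (Z : scx) (x : Ex X) (s : Fx X * nat) : Prop :=
  ZE Z x /\ ZF Z (fst s).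

Definition missing (Z : scx) (x : Ex X) (s : Fx X * nat) : Prop :=
  side_at x s /\ ~ lifts Z x s.

(* cardinality of a finite set (meaningful when the set is finite) *)
Definition fincard {T : Type} (A : T -> Prop) : nat :=
  epsilon (inhabits 0)
    (fun n => exists l : list T, NoDup l /\ (forall x, In x l <-> A x) /\ length l = n).

Definition orbit_reps (H : amap -> Prop) (Z : scx) (s : list (Ex X)) : Prop :=
  (forall z, In z s -> ZE Z z) /\
  (forall e, ZE Z e -> exists g z, H g /\ In z s /\ mE g z = e) /\
  (forall i j a b g, nth_error s i = Some a -> nth_error s j = Some b ->
     H g -> mE g a = b -> i = j).

Definition per (H : amap -> Prop) (Z : scx) : nat :=
  epsilon (inhabits 0)
    (fun n => exists s, orbit_reps H Z s /\
       n = list_sum (map (fun z => fincard (missing Z z)) s)).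

Definition enlarge (H : amap -> Prop) (Y : scx) (R : Fx X) : scx :=
  Scx (fun v => ZV Y v \/ exists g j o, H g /\ nth_error (bd X (mF g R)) j = Some o /\
                           (v = src X (fst o) \/ v = tgt X (fst o)))
      (fun e => ZE Y e \/ exists g j o, H g /\ nth_error (bd X (mF g R)) j = Some o /\
                           e = fst o)
      (fun F => ZF Y F \/ exists g, H g /\ F = mF g R).

(* the boundary cycle of R read from cycle-edge k, forwards (d = true) or
   backwards (d = false) *)
Definition reading (R : Fx X) (k : nat) (d : bool) : list (option (Ex X * bool)) :=
  map (fun j => img R (cyc (blen R) k d (j, true))) (seq 0 (blen R)).

Definition missing_3shell (Y : scx) (R : Fx X) (Q S : list (Ex X * bool)) : Prop :=
  ~ ZF Y R /\
  (exists k d, reading R k d = map Some (Q ++ S)) /\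
  (match Q ++ S with o :: _ => ZV Y (ostart o) | [] => False end) /\
  (forall o, In o Q -> ZE Y (fst o)) /\
  exists ps : list (list (Ex X * bool)),
    length ps <= 3 /\ concat ps = S /\ Forall piece ps.

(* Aut_H(R) = Stab_H(R)/Fix_H(R) *)
Definition stabH (H : amap -> Prop) (R : Fx X) (g : amap) : Prop :=
  H g /\ mF g R = R.
Definition fixes (R : Fx X) (g : amap) : Prop :=
  mF g R = R /\ forall c, fst c < blen R -> mB g R c = c.
Definition in_coset (H : amap -> Prop) (R : Fx X) (a b : amap) : Prop :=
  exists f, H f /\ fixes R f /\ aeq b (acomp a f).

Definition autH_card (H : amap -> Prop) (R : Fx X) : nat :=
  epsilon (inhabits 0)
    (fun n => exists l : list amap,
       (forall g, In g l -> stabH H R g) /\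
       (forall g, stabH H R g -> exists a, In a l /\ in_coset H R a g) /\
       (forall i j a b, nth_error l i = Some a -> nth_error l j = Some b ->
          in_coset H R a b -> i = j) /\
       length l = n).

End Defs.

(* Choose representatives of the H-orbits of 1-cells of the enlargement Y' = Y ∪ HR; those
   lying in Y represent the orbits of Y.  At an old representative z, the t_z sides at z lying
   on translates of R are missing for Y but lift to Y'.  A new orbit is the orbit of an edge of
   ∂R not in Y, so there are at most |S| of them, and each has at most M - 1 missing sides since
   the side on the translate of R lifts.  Hence per(Y') + t <= per(Y) + |S|(M - 1) with
   t = Σ t_z.  Conversely, every position of the outer path Q is recovered from one of these
   t sides together with an element of Aut_H(R), so |Q| <= t |Aut_H(R)|; together with
   |S| < 3λ|∂R| and 3λM |Aut_H(R)| < 1 this forces |S|(M - 1) < t. *)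

From Stdlib Require Import Reals List Arith.
From Stdlib Require Import Lia ClassicalEpsilon Classical Psatz.
Import ListNotations.
Set Implicit Arguments.

Definition asbool (P : Prop) : bool := if excluded_middle_informative P then true else false.

Lemma asboolT P : asbool P = true <-> P.
Proof. unfold asbool; destruct (excluded_middle_informative P); split; easy. Qed.

Lemma asboolF P : asbool P = false <-> ~ P.
Proof. unfold asbool; destruct (excluded_middle_informative P); split; easy. Qed.

Lemma list_sum_map_le {T : Type} (f g : T -> nat) l :
  (forall x, In x l -> f x <= g x) -> list_sum (map f l) <= list_sum (map g l).
Proof.
  induction l as [|a l IH]; simpl; intros Hfg; [lia|].
  specialize (IH (fun x Hx => Hfg x (or_intror Hx))). specialize (Hfg a (or_introl eq_refl)). lia.
Qed.

Lemma list_sum_map_add {T : Type} (f g : T -> nat) l :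
  list_sum (map (fun x => f x + g x) l) = list_sum (map f l) + list_sum (map g l).
Proof. induction l as [|a l IH]; simpl; lia. Qed.

Lemma list_sum_map_filter {T : Type} (f : T -> nat) (p : T -> bool) l :
  list_sum (map f l) =
  list_sum (map f (filter p l)) + list_sum (map f (filter (fun x => negb (p x)) l)).
Proof. induction l as [|a l IH]; simpl; [lia|]. destruct (p a); simpl; lia. Qed.

Lemma list_sum_map_const_le {T : Type} (f : T -> nat) c l :
  (forall x, In x l -> f x <= c) -> list_sum (map f l) <= length l * c.
Proof.
  induction l as [|a l IH]; simpl; intros Hf; [lia|].
  specialize (IH (fun x Hx => Hf x (or_intror Hx))). specialize (Hf a (or_introl eq_refl)). lia.
Qed.

(** * Finite cardinalities *)

Definition finite {T : Type} (A : T -> Prop) : Prop :=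
  exists l, NoDup l /\ forall x, In x l <-> A x.

Lemma fincard_eq {T : Type} {A : T -> Prop} {l} :
  NoDup l -> (forall x, In x l <-> A x) -> fincard A = length l.
Proof.
  intros Hl HlA. unfold fincard.
  destruct (epsilon_spec (inhabits 0)
    (fun n => exists l, NoDup l /\ (forall x, In x l <-> A x) /\ length l = n))
    as [l' [Hl' [Hl'A <-]]]; [exists (length l), l; auto|].
  apply Nat.le_antisymm; apply NoDup_incl_length; auto; intros x Hx.
  - apply HlA, Hl'A, Hx.
  - apply Hl'A, HlA, Hx.
Qed.

Lemma finite_fincard {T : Type} {A : T -> Prop} :
  finite A -> exists l, NoDup l /\ (forall x, In x l <-> A x) /\ fincard A = length l.
Proof. intros [l [Hl HlA]]. exists l. repeat split; try apply HlA; auto. apply fincard_eq; auto. Qed.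

Lemma finite_sub {T : Type} {A B : T -> Prop} : finite B -> (forall x, A x -> B x) -> finite A.
Proof.
  intros [l [Hl HlB]] HAB. exists (filter (fun x => asbool (A x)) l). split; [apply NoDup_filter; auto|].
  intros x. rewrite filter_In, asboolT. split; [tauto|]. intros Hx. split; auto. apply HlB; auto.
Qed.

Lemma fincard_le_inj {T U : Type} {A : T -> Prop} {B : U -> Prop} (f : T -> U) (g : U -> T) :
  finite A -> finite B -> (forall a, A a -> B (f a)) -> (forall a, A a -> g (f a) = a) ->
  fincard A <= fincard B.
Proof.
  intros [la [Hla HlaA]] [lb [Hlb HlbB]] Hf Hgf.
  rewrite (fincard_eq Hla HlaA), (fincard_eq Hlb HlbB), <- (length_map f la).
  apply NoDup_incl_length.
  - apply NoDup_map_NoDup_ForallPairs; auto. intros x y Hx Hy Hxy.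
    rewrite <- (Hgf x), <- (Hgf y) by (apply HlaA; auto). congruence.
  - intros y Hy. apply in_map_iff in Hy as [x [<- Hx]]. apply HlbB, Hf, HlaA, Hx.
Qed.

Lemma fincard_disjoint_le {T : Type} {A B C : T -> Prop} :
  finite C -> (forall x, A x -> C x) -> (forall x, B x -> C x) -> (forall x, A x -> B x -> False) ->
  fincard A + fincard B <= fincard C.
Proof.
  intros HC HAC HBC HAB.
  destruct (finite_fincard (finite_sub HC HAC)) as [la [Hla [HlaA ->]]].
  destruct (finite_fincard (finite_sub HC HBC)) as [lb [Hlb [HlbB ->]]].
  destruct (finite_fincard HC) as [lc [_ [HlcC ->]]].
  rewrite <- length_app. apply NoDup_incl_length.
  - apply NoDup_app; auto. intros x Ha Hb. apply (HAB x); [apply HlaA|apply HlbB]; auto.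
  - intros x Hx. apply HlcC. apply in_app_or in Hx as [Hx|Hx]; [apply HAC, HlaA|apply HBC, HlbB]; auto.
Qed.

Lemma fincard_lt {T : Type} {A C : T -> Prop} x :
  finite C -> (forall y, A y -> C y) -> C x -> ~ A x -> fincard A < fincard C.
Proof.
  intros HC HAC Hx HAx.
  destruct (finite_fincard (finite_sub HC HAC)) as [la [Hla [HlaA ->]]].
  destruct (finite_fincard HC) as [lc [_ [HlcC ->]]].
  change (length (x :: la) <= length lc). apply NoDup_incl_length.
  - constructor; auto. rewrite HlaA. auto.
  - intros y [<-|Hy]; apply HlcC; auto. apply HAC, HlaA, Hy.
Qed.

(** * Lists of representatives modulo an equivalence *)

Section Representatives.
Context {T : Type} (eqv : T -> T -> Prop).
Hypotheses (eqv_refl : forall x, eqv x x) (eqv_sym : forall x y, eqv x y -> eqv y x)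
  (eqv_trans : forall x y z, eqv x y -> eqv y z -> eqv x z).

Definition pairwise_inequiv (l : list T) : Prop := ForallOrdPairs (fun a b => ~ eqv a b) l.

Lemma pairwise_inequiv_nth_error l :
  pairwise_inequiv l <->
  (forall i j a b, nth_error l i = Some a -> nth_error l j = Some b -> eqv a b -> i = j).
Proof.
  split.
  - induction 1 as [|x l Hx Hl IH]; intros i j a b Ha Hb Hab; [destruct i; discriminate|].
    rewrite Forall_forall in Hx.
    destruct i, j; simpl in *; auto.
    + injection Ha as <-. apply nth_error_In in Hb. destruct (Hx _ Hb Hab).
    + injection Hb as <-. apply nth_error_In in Ha. destruct (Hx _ Ha (eqv_sym Hab)).
    + f_equal. eauto.
  - induction l as [|x l IH]; intros Hl; constructor.
    + apply Forall_forall. intros y Hy Hxy. apply In_nth_error in Hy as [j Hj].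
      discriminate (Hl 0 (S j) x y eq_refl Hj Hxy).
    + apply IH. intros i j a b Ha Hb Hab. injection (Hl (S i) (S j) a b Ha Hb Hab). auto.
Qed.

Lemma pairwise_inequiv_filter (f : T -> bool) l :
  pairwise_inequiv l -> pairwise_inequiv (filter f l).
Proof.
  induction 1 as [|x l Hx Hl IH]; simpl; [constructor|].
  destruct (f x); auto. constructor; auto.
  rewrite Forall_forall in *. intros y Hy. apply filter_In in Hy. apply Hx; tauto.
Qed.

Lemma pairwise_inequiv_eq l a b : pairwise_inequiv l -> In a l -> In b l -> eqv a b -> a = b.
Proof.
  intros Hl Ha Hb Hab.
  destruct (ForallOrdPairs_In Hl a b Ha Hb) as [|[Hn|Hn]]; auto; contradiction Hn; auto.
Qed.

Lemma pairwise_inequiv_NoDup l : pairwise_inequiv l -> NoDup l.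
Proof.
  induction 1 as [|x l Hx Hl IH]; constructor; auto.
  intros Hin. rewrite Forall_forall in Hx. apply (Hx x Hin), eqv_refl.
Qed.

Lemma pairwise_inequiv_exists L :
  exists l, incl l L /\ (forall x, In x L -> exists y, In y l /\ eqv y x) /\ pairwise_inequiv l.
Proof.
  induction L as [|x L [l [Hsub [Hcov Hl]]]].
  - exists []. repeat split; [intros ? []|intros ? []|constructor].
  - destruct (classic (exists y, In y l /\ eqv y x)) as [Hx|Hx].
    + exists l. repeat split; [intros z Hz; right; auto| |auto].
      intros z [<-|Hz]; auto.
    + exists (x :: l). repeat split.
      * intros z [<-|Hz]; [left|right]; auto.
      * intros z [<-|Hz]; [exists x; split; [left|]; auto|].
        destruct (Hcov z Hz) as [y [Hy Hyz]]. exists y; split; [right|]; auto.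
      * constructor; auto. apply Forall_forall. intros y Hy Hxy. apply Hx. eauto.
Qed.

Lemma pairwise_inequiv_length_le {U : Type} (rel : U -> T -> Prop) l (L : list U) :
  pairwise_inequiv l -> (forall x, In x l -> exists y, In y L /\ rel y x) ->
  (forall y x x', rel y x -> rel y x' -> eqv x x') -> length l <= length L.
Proof.
  intros Hl Hcov Hrel.
  destruct l as [|x0 l0]; [simpl; lia|].
  destruct (Hcov x0 (or_introl eq_refl)) as [y0 _].
  destruct (choice (fun x y => In x (x0 :: l0) -> In y L /\ rel y x)) as [f Hf].
  { intros x. destruct (classic (In x (x0 :: l0))) as [Hx|Hx].
    - destruct (Hcov x Hx) as [y Hy]. exists y; auto.
    - exists y0; tauto. }
  rewrite <- (length_map f). apply NoDup_incl_length.
  - apply NoDup_map_NoDup_ForallPairs; [|apply pairwise_inequiv_NoDup; auto].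
    intros x x' Hx Hx' Hff. apply (pairwise_inequiv_eq Hl Hx Hx').
    destruct (Hf x Hx) as [_ Hfx], (Hf x' Hx') as [_ Hfx']. rewrite Hff in Hfx. eauto.
  - intros y Hy. apply in_map_iff in Hy as [x [<- Hx]]. apply Hf, Hx.
Qed.

Lemma pairwise_inequiv_remove l1 a l2 :
  pairwise_inequiv (l1 ++ a :: l2) ->
  pairwise_inequiv (l1 ++ l2) /\ forall y, In y (l1 ++ l2) -> ~ eqv a y.
Proof.
  induction l1 as [|x l1 IH]; simpl; intros Hl; inversion Hl as [|? ? Hx Hl']; subst.
  - rewrite Forall_forall in Hx. split; auto.
  - destruct (IH Hl') as [IH1 IH2]. rewrite Forall_forall in Hx. split.
    + constructor; auto. apply Forall_forall. intros y Hy. apply Hx.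
      apply in_app_or in Hy. apply in_or_app. simpl. tauto.
    + intros y [<-|Hy] Hay; [|apply (IH2 y Hy Hay)].
      apply (Hx a); [apply in_or_app; simpl; auto|auto].
Qed.

Lemma pairwise_inequiv_list_sum (f : T -> nat) (E : T -> Prop) :
  (forall x y, eqv x y -> f x = f y) ->
  forall s t, (forall z, In z s -> E z) -> (forall z, In z t -> E z) ->
  (forall e, E e -> exists z, In z s /\ eqv z e) -> (forall e, E e -> exists z, In z t /\ eqv z e) ->
  pairwise_inequiv s -> pairwise_inequiv t -> list_sum (map f s) = list_sum (map f t).
Proof.
  intros Hf s. revert E. induction s as [|z s IH]; intros E t HsE HtE Hs Ht Hps Hpt.
  - destruct t as [|w t]; auto.
    destruct (Hs w (HtE w (or_introl eq_refl))) as [? [[] _]].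
  - destruct (Ht z (HsE z (or_introl eq_refl))) as [w [Hw Hwz]].
    apply in_split in Hw as [t1 [t2 ->]].
    destruct (pairwise_inequiv_remove t1 w t2 Hpt) as [Hpt' Hw'].
    inversion Hps as [|? ? Hz Hps']; subst. rewrite Forall_forall in Hz.
    rewrite map_app, list_sum_app. simpl. rewrite (Hf w z Hwz).
    rewrite (IH (fun e => E e /\ ~ eqv z e) (t1 ++ t2)); auto.
    + rewrite map_app, list_sum_app. lia.
    + intros y Hy. split; [apply HsE; right; auto|]. apply Hz; auto.
    + intros y Hy. split.
      * apply HtE. apply in_app_or in Hy. apply in_or_app. simpl; tauto.
      * intros Hzy. apply (Hw' y Hy). eauto.
    + intros e [He Hne]. destruct (Hs e He) as [y [[<-|Hy] Hye]]; [contradiction|eauto].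
    + intros e [He Hne]. destruct (Ht e He) as [y [Hy Hye]].
      apply in_app_or in Hy as [Hy|[<-|Hy]].
      * exists y; split; auto. apply in_or_app; auto.
      * exfalso. apply Hne. eauto.
      * exists y; split; auto. apply in_or_app; auto.
Qed.

End Representatives.

(** * Cellular maps of cycles and of the complex *)

Lemma mod_inj n x y : 0 < n -> x mod n = y mod n -> x <= y -> y < x + n -> x = y.
Proof.
  intros Hn Hxy Hle Hlt.
  pose proof (Nat.div_mod x n ltac:(lia)). pose proof (Nat.div_mod y n ltac:(lia)).
  pose proof (Nat.mod_upper_bound x n ltac:(lia)).
  assert (x / n = y / n); [|nia].
  apply Nat.le_antisymm; apply Nat.nlt_ge; intros Hq; nia.
Qed.

Lemma cyc_lt n k d c : 0 < n -> fst (cyc n k d c) < n.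
Proof. intros Hn. unfold cyc. destruct d; simpl; apply Nat.mod_upper_bound; lia. Qed.

Lemma cyc_fst n k d i b b' : fst (cyc n k d (i, b)) = fst (cyc n k d (i, b')).
Proof. unfold cyc. destruct d; reflexivity. Qed.

Lemma cyc_inj n k d i i' b b' : i < n -> i' < n ->
  fst (cyc n k d (i, b)) = fst (cyc n k d (i', b')) -> i = i'.
Proof.
  intros Hi Hi'. unfold cyc. destruct d; simpl; intros Heq.
  - destruct (Nat.le_gt_cases i i').
    + enough (k + i = k + i') by lia. apply (mod_inj (n := n)); lia.
    + enough (k + i' = k + i) by lia. apply (mod_inj (n := n)); lia.
  - destruct (Nat.le_gt_cases i i').
    + enough (k + (n - i') = k + (n - i)) by lia. apply (mod_inj (n := n)); lia.
    + enough (k + (n - i) = k + (n - i')) by lia. apply (mod_inj (n := n)); lia.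
Qed.

Lemma cyc_surj n k d p : 0 < n -> p < n -> exists i, i < n /\ fst (cyc n k d (i, true)) = p.
Proof.
  intros Hn Hp.
  set (f := fun i => fst (cyc n k d (i, true))).
  assert (Hincl : incl (seq 0 n) (map f (seq 0 n))).
  { apply NoDup_length_incl; [|rewrite length_map; lia|].
    - apply NoDup_map_NoDup_ForallPairs; [|apply seq_NoDup].
      intros x y Hx Hy. apply in_seq in Hx, Hy. apply cyc_inj; lia.
    - intros x Hx. apply in_map_iff in Hx as [i [<- _]]. apply in_seq.
      pose proof (cyc_lt k d (i, true) Hn). unfold f. lia. }
  destruct (proj1 (in_map_iff f (seq 0 n) p) (Hincl p (proj2 (in_seq n 0 p) (conj (Nat.le_0_l p) Hp))))
    as [i [Hip Hi]].
  apply in_seq in Hi. exists i; split; [lia|auto].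
Qed.

Lemma cyc_eq_at0 n k d k' d' : 0 < n -> cyc n k d (0, true) = cyc n k' d' (0, true) ->
  forall c, cyc n k d c = cyc n k' d' c.
Proof.
  intros Hn. unfold cyc; simpl. rewrite Nat.sub_0_r.
  destruct d, d'; simpl; intros Heq; injection Heq as Heq; try discriminate; intros [i b]; simpl.
  - rewrite !Nat.add_0_r in Heq. f_equal.
    rewrite (Nat.Div0.add_mod k), (Nat.Div0.add_mod k'), Heq. reflexivity.
  - f_equal. assert (Hk : k mod n = k' mod n).
    { rewrite <- (Nat.Div0.mod_add k 1 n), <- (Nat.Div0.mod_add k' 1 n).
      replace (k + 1 * n) with (k + n) by lia. replace (k' + 1 * n) with (k' + n) by lia. auto. }
    rewrite (Nat.Div0.add_mod k), (Nat.Div0.add_mod k'), Hk. reflexivity.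
Qed.

Section Automorphisms.
Context {X : complex2}.
Implicit Types (g : amap X) (F : Fx X) (x : Ex X) (s : Fx X * nat).

Definition sact g (s : Fx X * nat) : Fx X * nat :=
  (mF g (fst s), fst (mB g (fst s) (snd s, true))).

Lemma aut_blen g F : is_aut g -> blen (mF g F) = blen F.
Proof. intros [_ [_ [_ [_ Hbd]]]]. symmetry; exact (proj1 (proj1 (Hbd F))). Qed.

Lemma aut_cyc g F : is_aut g ->
  exists k d, forall c, fst c < blen F -> mB g F c = cyc (blen F) k d c.
Proof. intros [_ [_ [_ [_ Hbd]]]]. exact (proj2 (proj1 (Hbd F))). Qed.

Lemma aut_img g F c : is_aut g -> fst c < blen F ->
  img (mF g F) (mB g F c) = option_map (oact g) (img F c).
Proof. intros [_ [_ [_ [_ Hbd]]]]. apply (Hbd F). Qed.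

Lemma mB_fst g F i b b' : is_aut g -> i < blen F -> fst (mB g F (i, b)) = fst (mB g F (i, b')).
Proof.
  intros Hg Hi. destruct (aut_cyc F Hg) as [k [d Hkd]].
  rewrite !Hkd by (simpl; auto). apply cyc_fst.
Qed.

Lemma mB_lt g F c : is_aut g -> fst c < blen F -> fst (mB g F c) < blen (mF g F).
Proof.
  intros Hg Hc. rewrite (aut_blen F Hg). destruct (aut_cyc F Hg) as [k [d Hkd]].
  rewrite Hkd by auto. apply cyc_lt. lia.
Qed.

Lemma mB_surj g F p : is_aut g -> p < blen (mF g F) ->
  exists i, i < blen F /\ fst (mB g F (i, true)) = p.
Proof.
  intros Hg Hp. rewrite (aut_blen F Hg) in Hp. destruct (aut_cyc F Hg) as [k [d Hkd]].
  destruct (cyc_surj (n := blen F) k d ltac:(lia) Hp) as [i [Hi Hip]].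
  exists i. split; auto. rewrite Hkd; auto.
Qed.

Lemma img_nth_error F c o :
  nth_error (bd X F) (fst c) = Some o -> img F c = Some (fst o, Bool.eqb (snd o) (snd c)).
Proof. unfold img. intros ->. reflexivity. Qed.

Lemma nth_error_img F c o' : img F c = Some o' ->
  exists o, nth_error (bd X F) (fst c) = Some o /\ fst o = fst o'.
Proof.
  unfold img. destruct (nth_error (bd X F) (fst c)) as [o|]; simpl; intros Ho; [|discriminate].
  injection Ho as <-. exists o; auto.
Qed.

Lemma side_at_lt x s : side_at x s -> snd s < blen (fst s).
Proof. intros [o [Ho _]]. apply nth_error_Some. congruence. Qed.

Lemma side_at_sact g x s : is_aut g -> side_at x s -> side_at (mE g x) (sact g s).
Proof.
  intros Hg Hs. pose proof (side_at_lt Hs) as Hlt. destruct Hs as [o [Ho <-]].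
  pose proof (aut_img (fst s) (snd s, true) Hg Hlt) as Himg.
  rewrite (img_nth_error (fst s) (snd s, true) Ho) in Himg.
  destruct (nth_error_img _ _ Himg) as [o' [Ho' Hoo']]. exists o'. split; auto.
Qed.

Lemma aeq_id_mV g g' : aeq (acomp g g') (aid X) -> forall v, mV g (mV g' v) = v.
Proof. intros [HV _]. apply HV. Qed.
Lemma aeq_id_mE g g' : aeq (acomp g g') (aid X) -> forall e, mE g (mE g' e) = e.
Proof. intros [_ [HE _]]. apply HE. Qed.
Lemma aeq_id_mF g g' : aeq (acomp g g') (aid X) -> forall F, mF g (mF g' F) = F.
Proof. intros [_ [_ [_ [HF _]]]]. apply HF. Qed.
Lemma aeq_id_mB g g' : aeq (acomp g g') (aid X) ->
  forall F c, fst c < blen F -> mB g (mF g' F) (mB g' F c) = c.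
Proof. intros [_ [_ [_ [_ HB]]]]. apply HB. Qed.
Lemma aeq_id_mO g g' : aeq (acomp g g') (aid X) -> forall e, mO g (mE g' e) = mO g' e.
Proof.
  intros [_ [_ [HO _]]] e. specialize (HO e). simpl in HO.
  destruct (mO g (mE g' e)), (mO g' e); simpl in *; congruence.
Qed.



Lemma sact_cancel g g' x s : is_aut g -> is_aut g' -> aeq (acomp g' g) (aid X) ->
  side_at x s -> sact g' (sact g s) = s.
Proof.
  intros Hg Hg' Hinv Hs. pose proof (side_at_lt Hs) as Hlt. destruct s as [F j]. unfold sact; simpl in *.
  rewrite (aeq_id_mF Hinv).
  rewrite (mB_fst (mF g F) true (snd (mB g F (j, true))) Hg' (mB_lt F (j, true) Hg Hlt)),
    <- surjective_pairing, (aeq_id_mB Hinv F (j, true) Hlt).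
  reflexivity.
Qed.

End Automorphisms.

Section Shells.
Context {X : complex2} (Y : scx X) (R : Fx X).

Definition bd_edge_in (j : nat) : Prop :=
  exists o, nth_error (bd X R) j = Some o /\ ZE Y (fst o).

Definition bd_positions_in : list nat :=
  filter (fun j => asbool (bd_edge_in j)) (seq 0 (blen R)).

Definition bd_positions_out : list nat :=
  filter (fun j => negb (asbool (bd_edge_in j))) (seq 0 (blen R)).

Lemma bd_positions_length : length bd_positions_in + length bd_positions_out = blen R.
Proof. unfold bd_positions_in, bd_positions_out. rewrite filter_length. apply length_seq. Qed.

Lemma reading_nth_error k d i : i < blen R ->
  nth_error (reading R k d) i = Some (img R (cyc (blen R) k d (i, true))).
Proof.
  intros Hi. unfold reading. rewrite nth_error_map, nth_error_seq.
  replace (Nat.ltb i (blen R)) with true by (symmetry; apply Nat.ltb_lt; auto). reflexivity.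
Qed.

Lemma shell_length Q S : missing_3shell Y R Q S -> length Q + length S = blen R.
Proof.
  intros [_ [[k [d Hread]] _]]. apply (f_equal (@length _)) in Hread.
  unfold reading in Hread. rewrite length_map, length_seq, length_map, length_app in Hread. auto.
Qed.

Lemma shell_outer_le Q S : missing_3shell Y R Q S -> length Q <= length bd_positions_in.
Proof.
  intros Hshell. pose proof (shell_length Hshell) as Hlen.
  destruct Hshell as [_ [[k [d Hread]] [_ [HQ _]]]].
  set (p := fun i => fst (cyc (blen R) k d (i, true))).
  rewrite <- (length_seq (length Q) 0), <- (length_map p).
  apply NoDup_incl_length.
  - apply NoDup_map_NoDup_ForallPairs; [|apply seq_NoDup].
    intros i i' Hi Hi'. apply in_seq in Hi, Hi'. apply cyc_inj; lia.
  - intros j Hj. apply in_map_iff in Hj as [i [<- Hi]]. apply in_seq in Hi.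
    assert (Hq : nth_error (reading R k d) i = Some (nth_error Q i)).
    { rewrite Hread, nth_error_map, nth_error_app1 by lia.
      destruct (nth_error Q i) eqn:Hqi; [reflexivity|apply nth_error_None in Hqi; lia]. }
    rewrite reading_nth_error in Hq by lia. injection Hq as Hq.
    destruct (nth_error Q i) as [q|] eqn:Hqi; [|apply nth_error_None in Hqi; lia].
    destruct (nth_error_img R (cyc (blen R) k d (i, true)) Hq) as [o [Ho Hoq]].
    apply filter_In. split.
    + apply in_seq. pose proof (cyc_lt (n := blen R) k d (i, true)). unfold p. lia.
    + apply asboolT. exists o. split; auto. rewrite Hoq. apply HQ, nth_error_In with i, Hqi.
Qed.

End Shells.

(** * Orbits, perimeter and the enlargement *)

Section Orbits.
Context {X : complex2} (H : amap X -> Prop).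
Hypothesis HG : subgroup H.
Implicit Types (g : amap X) (F : Fx X) (Z : scx X) (e x z : Ex X) (s : Fx X * nat).

Definition same_orbit e e' : Prop := exists g, H g /\ mE g e = e'.

Lemma subgroup_aut g : H g -> is_aut g.
Proof. destruct HG as [Haut _]. apply Haut. Qed.

Lemma subgroup_inv g : H g ->
  exists g', H g' /\ aeq (acomp g g') (aid X) /\ aeq (acomp g' g) (aid X).
Proof. destruct HG as [_ [_ [_ Hinv]]]. apply Hinv. Qed.

Lemma subgroup_mul g1 g2 : H g1 -> H g2 -> exists g, H g /\ aeq g (acomp g1 g2).
Proof. destruct HG as [_ [_ [Hmul _]]]. apply Hmul. Qed.

Lemma same_orbit_refl e : same_orbit e e.
Proof. destruct HG as [_ [[g [Hg Hid]] _]]. exists g. split; auto. apply Hid. Qed.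

Lemma same_orbit_sym e e' : same_orbit e e' -> same_orbit e' e.
Proof.
  intros [g [Hg <-]]. destruct (subgroup_inv Hg) as [g' [Hg' [_ Hinv]]].
  exists g'. split; auto. apply (aeq_id_mE Hinv).
Qed.

Lemma same_orbit_trans e1 e2 e3 : same_orbit e1 e2 -> same_orbit e2 e3 -> same_orbit e1 e3.
Proof.
  intros [g1 [Hg1 <-]] [g2 [Hg2 <-]]. destruct (subgroup_mul Hg2 Hg1) as [g [Hg Heq]].
  exists g. split; auto. apply Heq.
Qed.

Lemma invariant_ZE Z g e : invariant H Z -> H g -> ZE Z e -> ZE Z (mE g e).
Proof. intros HZ Hg. apply (HZ g Hg). Qed.

Lemma invariant_ZE_inv Z g e : invariant H Z -> H g -> ZE Z (mE g e) -> ZE Z e.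
Proof.
  intros HZ Hg He. destruct (subgroup_inv Hg) as [g' [Hg' [_ Hinv]]].
  rewrite <- (aeq_id_mE Hinv e). apply (HZ g' Hg'), He.
Qed.

Lemma invariant_ZF_inv Z g F : invariant H Z -> H g -> ZF Z (mF g F) -> ZF Z F.
Proof.
  intros HZ Hg HF. destruct (subgroup_inv Hg) as [g' [Hg' [_ Hinv]]].
  rewrite <- (aeq_id_mF Hinv F). apply (HZ g' Hg'), HF.
Qed.

Lemma thin_side_at M x : thin X M -> finite (side_at x) /\ fincard (side_at x) <= M.
Proof.
  intros Hthin. destruct (Hthin x) as [l [Hl [HlS Hlen]]].
  split; [exists l; auto|]. rewrite (fincard_eq Hl HlS); auto.
Qed.

Lemma thin_finite {M} (x : Ex X) {A : Fx X * nat -> Prop} :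
  thin X M -> (forall s, A s -> side_at x s) -> finite A.
Proof. intros Hthin. apply finite_sub, (thin_side_at x Hthin). Qed.

Lemma fincard_missing_act M Z g z : thin X M -> invariant H Z -> H g ->
  fincard (missing Z (mE g z)) = fincard (missing Z z).
Proof.
  intros Hthin HZ Hg. destruct (subgroup_inv Hg) as [g' [Hg' [Hinv Hinv']]].
  pose proof (subgroup_aut Hg) as Ag. pose proof (subgroup_aut Hg') as Ag'.
  assert (Hfin : forall y, finite (missing Z y)).
  { intros y. apply (thin_finite (x := y) Hthin). intros s [Hs _]; auto. }
  apply Nat.le_antisymm.
  - apply (fincard_le_inj (sact g') (sact g)); auto.
    + intros s [Hs Hnl]. split.
      * rewrite <- (aeq_id_mE Hinv' z). apply side_at_sact; auto.
      * intros [HzZ HFZ]. apply Hnl. split; [apply (invariant_ZE z HZ Hg HzZ)|].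
        rewrite <- (aeq_id_mF Hinv (fst s)). apply (HZ g Hg), HFZ.
    + intros s [Hs _]. apply (sact_cancel Ag' Ag Hinv Hs).
  - apply (fincard_le_inj (sact g) (sact g')); auto.
    + intros s [Hs Hnl]. split; [apply side_at_sact; auto|].
      intros [HzZ HFZ]. simpl in HFZ. apply Hnl.
      split; [exact (invariant_ZE_inv z HZ Hg HzZ)|exact (invariant_ZF_inv (fst s) HZ Hg HFZ)].
    + intros s [Hs _]. apply (sact_cancel Ag Ag' Hinv' Hs).
Qed.

Lemma orbit_reps_iff Z l :
  orbit_reps H Z l <->
  (forall z, In z l -> ZE Z z) /\ (forall e, ZE Z e -> exists z, In z l /\ same_orbit z e) /\
  pairwise_inequiv same_orbit l.
Proof.
  unfold orbit_reps. rewrite (pairwise_inequiv_nth_error same_orbit same_orbit_sym). split.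
  - intros [HlZ [Hcov Hdist]]. split; [auto|split].
    + intros e He. destruct (Hcov e He) as [g [z [Hg [Hz Hze]]]]. exists z. split; auto. exists g; auto.
    + intros i j a b Ha Hb [g [Hg Hab]]. eauto.
  - intros [HlZ [Hcov Hdist]]. split; [auto|split].
    + intros e He. destruct (Hcov e He) as [z [Hz [g [Hg Hze]]]]. exists g, z; auto.
    + intros i j a b g Ha Hb Hg Hab. apply (Hdist i j a b Ha Hb). exists g; auto.
Qed.

Lemma orbit_reps_exist Z es : (forall e, In e es -> ZE Z e) ->
  (forall e, ZE Z e -> exists z, In z es /\ same_orbit z e) -> exists l, orbit_reps H Z l.
Proof.
  intros HesZ Hcov.
  destruct (pairwise_inequiv_exists same_orbit same_orbit_refl same_orbit_sym es)
    as [l [Hsub [Hlcov Hl]]].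
  exists l. apply orbit_reps_iff. split; [|split]; auto.
  intros e He. destruct (Hcov e He) as [z [Hz Hze]]. destruct (Hlcov z Hz) as [y [Hy Hyz]].
  exists y. split; auto. apply (same_orbit_trans Hyz Hze).
Qed.

Lemma per_some_orbit_reps Z : (exists l, orbit_reps H Z l) ->
  exists l, orbit_reps H Z l /\ per H Z = list_sum (map (fun z => fincard (missing Z z)) l).
Proof.
  intros [l Hl]. unfold per. apply epsilon_spec.
  exists (list_sum (map (fun z => fincard (missing Z z)) l)), l; auto.
Qed.

Lemma per_orbit_reps M Z l : thin X M -> invariant H Z -> orbit_reps H Z l ->
  per H Z = list_sum (map (fun z => fincard (missing Z z)) l).
Proof.
  intros Hthin HZ Hl. destruct (per_some_orbit_reps (ex_intro _ l Hl)) as [l' [Hl' ->]].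
  apply orbit_reps_iff in Hl as [HlZ [Hlcov Hl]], Hl' as [Hl'Z [Hl'cov Hl']].
  apply (pairwise_inequiv_list_sum same_orbit_sym same_orbit_trans) with (E := ZE Z); auto.
  intros x y [g [Hg <-]]. symmetry. apply (fincard_missing_act x Hthin HZ Hg).
Qed.

Section AutH.
Variable R : Fx X.
Implicit Types (a b : amap X).

Definition agree_on_bd a b : Prop := forall c, fst c < blen R -> mB a R c = mB b R c.

Lemma in_coset_agree a b : in_coset H R a b -> agree_on_bd a b.
Proof.
  intros [f [_ [[HfR HfB] [_ [_ [_ [_ Hb]]]]]]] c Hc.
  rewrite (Hb R c Hc). simpl. rewrite HfB, HfR; auto.
Qed.

Lemma agree_in_coset a b : stabH H R a -> stabH H R b -> agree_on_bd a b -> in_coset H R a b.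
Proof.
  intros [Ha HaR] [Hb HbR] Hab.
  destruct (subgroup_inv Ha) as [a' [Ha' [Hinv Hinv']]].
  pose proof (subgroup_aut Hb) as Ab.
  destruct (subgroup_mul Ha' Hb) as [f [Hf [FV [FE [FO [FF FB]]]]]]. simpl in FV, FE, FO, FF, FB.
  exists f. split; [auto|split; [split|]].
  - rewrite FF, HbR, <- HaR at 1. apply (aeq_id_mF Hinv').
  - intros c Hc. rewrite FB, HbR, <- Hab by auto. rewrite <- HaR at 1. apply (aeq_id_mB Hinv' R c Hc).
  - split; [|split; [|split; [|split]]]; simpl.
    + intros v. rewrite FV. symmetry. apply (aeq_id_mV Hinv).
    + intros e. rewrite FE. symmetry. apply (aeq_id_mE Hinv).
    + intros e. rewrite FO, FE, (aeq_id_mO Hinv). destruct (mO a' (mE b e)), (mO b e); reflexivity.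
    + intros F. rewrite FF. symmetry. apply (aeq_id_mF Hinv).
    + intros F c Hc. rewrite FB, FF by auto. symmetry. apply (aeq_id_mB Hinv). apply mB_lt; auto.
Qed.

Lemma agree_on_bd_at0 a b : 0 < blen R -> is_aut a -> is_aut b ->
  mB a R (0, true) = mB b R (0, true) -> agree_on_bd a b.
Proof.
  intros Hn Ha Hb H0 c Hc.
  destruct (aut_cyc R Ha) as [k [d Hkd]], (aut_cyc R Hb) as [k' [d' Hkd']].
  rewrite Hkd, Hkd' in H0 by (simpl; lia). rewrite Hkd, Hkd' by auto.
  apply cyc_eq_at0; auto.
Qed.

Lemma agree_on_bd_sym a b : agree_on_bd a b -> agree_on_bd b a.
Proof. intros Hab c Hc. symmetry. auto. Qed.

(* An automorphism of a cycle is determined by the image of one oriented edge, so the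
   stabiliser of R acts on ∂R through at most 2 |∂R| maps. *)
Lemma stab_bd_actions_finite : 0 < blen R ->
  exists L, (forall a, In a L -> stabH H R a) /\
    (forall b, stabH H R b -> exists a, In a L /\ agree_on_bd a b).
Proof.
  intros Hn. set (key := fun g => mB g R (0, true)).
  destruct (choice (fun k g => (exists g', stabH H R g' /\ key g' = k) -> stabH H R g /\ key g = k))
    as [pick Hpick].
  { intros k. destruct (classic (exists g', stabH H R g' /\ key g' = k)) as [[g' Hg']|Hk].
    - exists g'. auto.
    - exists (aid X). tauto. }
  exists (map pick (filter (fun k => asbool (exists g, stabH H R g /\ key g = k))
                          (list_prod (seq 0 (blen R)) [true; false]))).
  split.
  - intros a Ha. apply in_map_iff in Ha as [k [<- Hk]]. apply filter_In in Hk as [_ Hk].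
    apply asboolT, Hpick in Hk as [Hk _]. auto.
  - intros b Hb. assert (Hkey : exists g, stabH H R g /\ key g = key b) by eauto.
    destruct (Hpick _ Hkey) as [[Ha _] Hab].
    exists (pick (key b)). split.
    + apply in_map, filter_In. split; [|apply asboolT, Hkey].
      destruct Hb as [Hb _]. destruct (aut_cyc R (subgroup_aut Hb)) as [k [d Hkd]].
      unfold key. rewrite Hkd by (simpl; lia).
      destruct (cyc (blen R) k d (0, true)) as [p o] eqn:Hp. apply in_prod.
      * apply in_seq. pose proof (cyc_lt k d (0, true) Hn) as Hlt. rewrite Hp in Hlt. simpl in Hlt. lia.
      * destruct o; simpl; auto.
    + destruct Hb as [Hb _]. apply agree_on_bd_at0; auto; apply subgroup_aut; auto.
Qed.

Lemma autH_transversal : 0 < blen R ->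
  exists l, (forall a, In a l -> stabH H R a) /\
    (forall b, stabH H R b -> exists a, In a l /\ in_coset H R a b) /\
    (forall i j a b, nth_error l i = Some a -> nth_error l j = Some b -> in_coset H R a b -> i = j).
Proof.
  intros Hn. destruct (stab_bd_actions_finite Hn) as [L [HL HLcov]].
  destruct (pairwise_inequiv_exists agree_on_bd (fun a c _ => eq_refl) agree_on_bd_sym L)
    as [l [Hsub [Hlcov Hl]]].
  exists l. split; [|split].
  - intros a Ha. apply HL, Hsub, Ha.
  - intros b Hb. destruct (HLcov b Hb) as [a [Ha Hab]]. destruct (Hlcov a Ha) as [a' [Ha' Ha'a]].
    exists a'. split; auto. apply agree_in_coset; [apply HL, Hsub, Ha'|auto|].
    intros c Hc. rewrite Ha'a, Hab; auto.
  - intros i j a b Ha Hb Hab.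
    apply (proj1 (pairwise_inequiv_nth_error agree_on_bd agree_on_bd_sym l) Hl i j a b Ha Hb).
    apply in_coset_agree, Hab.
Qed.

Lemma autH_card_spec : 0 < blen R ->
  exists l, (forall a, In a l -> stabH H R a) /\
    (forall b, stabH H R b -> exists a, In a l /\ in_coset H R a b) /\ autH_card H R = length l.
Proof.
  intros Hn. destruct (autH_transversal Hn) as [l Hl]. unfold autH_card.
  destruct (epsilon_spec (inhabits 0) (fun n => exists l : list (amap X),
       (forall g, In g l -> stabH H R g) /\
       (forall g, stabH H R g -> exists a, In a l /\ in_coset H R a g) /\
       (forall i j a b, nth_error l i = Some a -> nth_error l j = Some b ->
          in_coset H R a b -> i = j) /\ length l = n)) as [l' [Hl'1 [Hl'2 [_ Hl'3]]]].
  { exists (length l), l. tauto. }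
  exists l'. auto.
Qed.

End AutH.

Section Enlargement.
Variables (M : nat) (Y : scx X) (Rc : Fx X).
Hypotheses (Hthin : thin X M) (HY : invariant H Y) (HRc : ~ ZF Y Rc).
Local Notation Y' := (enlarge H Y Rc).

(* Missing for Y since R is not in the H-invariant Y, but lifting to Y'. *)
Definition translate_sides (z : Ex X) (s : Fx X * nat) : Prop :=
  side_at z s /\ exists h, H h /\ fst s = mF h Rc.

Lemma enlarge_edge_cases e : ZE Y' e ->
  ZE Y e \/ exists j o, nth_error (bd X Rc) j = Some o /\ same_orbit (fst o) e.
Proof.
  intros [He|[g [j [o [Hg [Ho ->]]]]]]; [left; auto|right].
  destruct (subgroup_inv Hg) as [g' [Hg' [Hinv Hinv']]].
  assert (Hj : j < blen (mF g Rc)) by (apply nth_error_Some; congruence).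
  pose proof (aut_img (mF g Rc) (j, true) (subgroup_aut Hg') Hj) as Himg.
  rewrite (img_nth_error (mF g Rc) (j, true) Ho), (aeq_id_mF Hinv') in Himg.
  destruct (nth_error_img Rc _ Himg) as [o0 [Ho0 Hfst]].
  exists (fst (mB g' (mF g Rc) (j, true))), o0. split; auto.
  exists g. split; auto. rewrite Hfst. apply (aeq_id_mE Hinv).
Qed.

Lemma enlarge_orbit_reps_exist : cocompact H Y -> exists l, orbit_reps H Y' l.
Proof.
  intros [_ [_ [es [_ [_ [HesY [_ [_ [Hcov _]]]]]]]]].
  destruct HG as [_ [[g0 [Hg0 [_ [_ [_ [Hg0F _]]]]]] _]].
  apply (orbit_reps_exist Y' (es ++ map fst (bd X Rc))).
  - intros e He. apply in_app_or in He as [He|He]; [left; auto|right].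
    apply in_map_iff in He as [o [<- Ho]]. apply In_nth_error in Ho as [j Hj].
    exists g0, j, o. rewrite (Hg0F Rc). auto.
  - intros e He. destruct (enlarge_edge_cases He) as [HeY|[j [o [Ho Hoe]]]].
    + destruct (Hcov e HeY) as [g [z [Hg [Hz Hze]]]].
      exists z. split; [apply in_or_app; auto|exists g; auto].
    + exists (fst o). split; auto. apply in_or_app; right. apply in_map, nth_error_In with j, Ho.
Qed.

Lemma orbit_reps_enlarge_restrict l :
  orbit_reps H Y' l -> orbit_reps H Y (filter (fun z => asbool (ZE Y z)) l).
Proof.
  rewrite !orbit_reps_iff. intros [_ [Hcov Hl]]. split; [|split].
  - intros z Hz. apply filter_In in Hz as [_ Hz]. apply asboolT, Hz.
  - intros e He. destruct (Hcov e (or_introl He)) as [z [Hz [g [Hg Hze]]]].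
    exists z. split; [|exists g; auto]. apply filter_In. split; auto.
    apply asboolT. subst e. apply (invariant_ZE_inv z HY Hg He).
  - apply pairwise_inequiv_filter, Hl.
Qed.

Lemma missing_enlarge_le z : ZE Y z ->
  fincard (missing Y' z) + fincard (translate_sides z) <= fincard (missing Y z).
Proof.
  intros Hz. apply fincard_disjoint_le.
  - apply (thin_finite (x := z) Hthin). intros s [Hs _]; auto.
  - intros s [Hs Hnl]. split; auto. intros [_ HF]. apply Hnl. split; left; auto.
  - intros s [Hs [h [Hh Hsh]]]. split; auto. intros [_ HF]. apply HRc.
    rewrite Hsh in HF. apply (invariant_ZF_inv Rc HY Hh HF).
  - intros s [_ Hnl] [_ [h [Hh Hsh]]]. apply Hnl. split; [left; auto|right; exists h; auto].
Qed.

Lemma missing_enlarge_lt w : ZE Y' w -> ~ ZE Y w -> fincard (missing Y' w) < M.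
Proof.
  intros [HwY|[g [j [o [Hg [Ho ->]]]]]] HnY; [contradiction|].
  destruct (thin_side_at (fst o) Hthin) as [Hfin Hle].
  enough (fincard (missing Y' (fst o)) < fincard (side_at (fst o))) by lia.
  apply (fincard_lt (mF g Rc, j) Hfin).
  - intros s [Hs _]; auto.
  - exists o; auto.
  - intros [_ Hnl]. apply Hnl. split; right; [exists g, j, o|exists g]; auto.
Qed.

Lemma new_orbit_reps_le ws : pairwise_inequiv same_orbit ws ->
  (forall w, In w ws -> ZE Y' w /\ ~ ZE Y w) -> length ws <= length (bd_positions_out Y Rc).
Proof.
  intros Hws HwsY.
  apply (pairwise_inequiv_length_le same_orbit_refl same_orbit_sym
           (fun j w => exists o, nth_error (bd X Rc) j = Some o /\ same_orbit (fst o) w)); auto.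
  - intros w Hw. destruct (HwsY w Hw) as [HwY' HwY].
    destruct (enlarge_edge_cases HwY') as [|[j [o [Ho How]]]]; [contradiction|].
    exists j. split; [|exists o; auto]. apply filter_In. split.
    + apply in_seq. enough (j < blen Rc) by lia. apply nth_error_Some. congruence.
    + apply Bool.negb_true_iff, asboolF. intros [o' [Ho' Ho'Y]].
      rewrite Ho in Ho'. injection Ho' as <-. destruct How as [g [Hg <-]].
      apply HwY, (invariant_ZE (fst o) HY Hg Ho'Y).
  - intros j w w' [o [Ho How]] [o' [Ho' How']]. rewrite Ho in Ho'. injection Ho' as <-.
    apply (same_orbit_trans (same_orbit_sym How) How').
Qed.

Lemma bd_position_translate_side zs j :
  (forall e, ZE Y e -> exists z, In z zs /\ same_orbit z e) -> In j (bd_positions_in Y Rc) ->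
  exists z s g, In z zs /\ translate_sides z s /\ H g /\ sact g s = (Rc, j).
Proof.
  intros Hcov Hj. apply filter_In in Hj as [_ Hj]. apply asboolT in Hj as [o [Ho HoY]].
  destruct (Hcov _ HoY) as [z [Hz [g [Hg Hgz]]]].
  destruct (subgroup_inv Hg) as [g' [Hg' [Hinv Hinv']]].
  assert (Hside : side_at (fst o) (Rc, j)) by (exists o; auto).
  exists z, (sact g' (Rc, j)), g. split; [auto|split; [split|split; [auto|]]].
  - rewrite <- (aeq_id_mE Hinv' z), Hgz. apply side_at_sact; auto. apply subgroup_aut; auto.
  - exists g'. auto.
  - apply (sact_cancel (subgroup_aut Hg') (subgroup_aut Hg) Hinv Hside).
Qed.

Lemma stab_maps_position g h b s q j :
  H g -> H h -> aeq b (acomp g h) -> mF h Rc = fst s -> q < blen Rc ->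
  fst (mB h Rc (q, true)) = snd s -> sact g s = (Rc, j) -> fst (mB b Rc (q, true)) = j.
Proof.
  intros Hg Hh [_ [_ [_ [_ Hb]]]] HhR Hq Hhq Hgs. injection Hgs as _ <-.
  rewrite (Hb Rc (q, true) Hq). simpl. rewrite HhR, (surjective_pairing (mB h Rc (q, true))), Hhq.
  pose proof (subgroup_aut Hh) as Ah.
  apply mB_fst; [apply subgroup_aut; auto|]. rewrite <- Hhq, <- HhR. apply mB_lt; auto.
Qed.

Lemma bd_positions_in_le zs :
  (forall e, ZE Y e -> exists z, In z zs /\ same_orbit z e) ->
  length (bd_positions_in Y Rc) <=
  list_sum (map (fun z => fincard (translate_sides z)) zs) * autH_card H Rc.
Proof.
  intros Hcov. destruct (Nat.eq_0_gt_0_cases (blen Rc)) as [Hn|Hn].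
  { unfold bd_positions_in. rewrite Hn. simpl. lia. }
  destruct (autH_card_spec Rc Hn) as [l [Hl [Hlcov ->]]].
  destruct (choice (fun z L => NoDup L /\ (forall s, In s L <-> translate_sides z s) /\
                               fincard (translate_sides z) = length L)) as [Lz HLz].
  { intros z. apply finite_fincard, (thin_finite (x := z) Hthin). intros s [Hs _]; auto. }
  set (T := flat_map Lz zs).
  assert (HT : length T = list_sum (map (fun z => fincard (translate_sides z)) zs)).
  { unfold T. rewrite length_flat_map. f_equal. apply map_ext. intros z. symmetry. apply HLz. }
  destruct (choice (fun s (hq : amap X * nat) => In s T ->
      H (fst hq) /\ mF (fst hq) Rc = fst s /\ snd hq < blen Rc /\
      fst (mB (fst hq) Rc (snd hq, true)) = snd s))
    as [hq Hhq].
  { intros s. destruct (classic (In s T)) as [Hs|Hs]; [|exists (aid X, 0); tauto].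
    apply in_flat_map in Hs as [z [_ Hs]]. apply HLz in Hs as [Hs [h [Hh Hsh]]].
    pose proof (side_at_lt Hs) as Hlt. rewrite Hsh in Hlt.
    destruct (mB_surj Rc (subgroup_aut Hh) Hlt) as [q [Hq Hhq]]. exists (h, q). simpl. auto. }
  (* A pair (s, a) decodes to the position of ∂R to which a sends the preimage of s under h. *)
  rewrite <- HT, <- length_prod,
    <- (length_map (fun sa => fst (mB (snd sa) Rc (snd (hq (fst sa)), true)))).
  apply NoDup_incl_length; [apply NoDup_filter, seq_NoDup|].
  intros j Hj. destruct (@bd_position_translate_side zs j Hcov Hj) as [z [s [g [Hz [Hs [Hg Hgs]]]]]].
  assert (HsT : In s T) by (apply in_flat_map; exists z; split; [|apply HLz]; auto).
  destruct (Hhq s HsT) as [Hh [HhR [Hq Hhqs]]].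
  destruct (subgroup_mul Hg Hh) as [b [Hb Hbgh]].
  assert (Hbstab : stabH H Rc b).
  { split; auto. destruct Hbgh as [_ [_ [_ [HbF _]]]]. rewrite HbF. simpl. rewrite HhR.
    injection Hgs as HgR _. exact HgR. }
  destruct (Hlcov b Hbstab) as [a [Ha Hab]].
  apply in_map_iff. exists (s, a). split; [simpl|apply in_prod; auto].
  rewrite (in_coset_agree Hab) by auto. apply (stab_maps_position Hg Hh Hbgh HhR Hq Hhqs Hgs).
Qed.

Lemma per_enlarge_bound : cocompact H Y ->
  exists t, per H Y' + t <= per H Y + length (bd_positions_out Y Rc) * (M - 1) /\
            length (bd_positions_in Y Rc) <= t * autH_card H Rc.
Proof.
  intros Hcc. destruct (enlarge_orbit_reps_exist Hcc) as [l0 Hl0].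
  destruct (per_some_orbit_reps (ex_intro _ l0 Hl0)) as [l [Hl ->]].
  pose proof (orbit_reps_enlarge_restrict Hl) as Hold.
  set (old := filter (fun z => asbool (ZE Y z)) l) in *.
  set (new := filter (fun z => negb (asbool (ZE Y z))) l).
  exists (list_sum (map (fun z => fincard (translate_sides z)) old)). split.
  - rewrite (per_orbit_reps Hthin HY Hold), (list_sum_map_filter _ (fun z => asbool (ZE Y z)) l).
    fold old new.
    assert (Hold_le : list_sum (map (fun z => fincard (missing Y' z)) old) +
                      list_sum (map (fun z => fincard (translate_sides z)) old) <=
                      list_sum (map (fun z => fincard (missing Y z)) old)).
    { rewrite <- list_sum_map_add. apply list_sum_map_le. intros z Hz.
      apply missing_enlarge_le. apply filter_In in Hz as [_ Hz]. apply asboolT, Hz. }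
    apply orbit_reps_iff in Hl as [HlY' [_ Hl]].
    assert (Hnew : forall w, In w new -> ZE Y' w /\ ~ ZE Y w).
    { intros w Hw. apply filter_In in Hw as [Hw HwY]. split; auto.
      apply Bool.negb_true_iff, asboolF in HwY. auto. }
    assert (Hnew_le : list_sum (map (fun z => fincard (missing Y' z)) new) <= length new * (M - 1)).
    { apply list_sum_map_const_le. intros w Hw. destruct (Hnew w Hw) as [HwY' HwY].
      pose proof (missing_enlarge_lt HwY' HwY). lia. }
    assert (Hnew_count : length new <= length (bd_positions_out Y Rc)).
    { apply new_orbit_reps_le; auto. apply pairwise_inequiv_filter, Hl. }
    pose proof (Nat.mul_le_mono_r _ _ (M - 1) Hnew_count). lia.
  - apply bd_positions_in_le. apply orbit_reps_iff in Hold as [_ [Hcov _]]. exact Hcov.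
Qed.

End Enlargement.

End Orbits.

Lemma perimeter_arith {n s i o t a m : nat} {lam : R} :
  (0 < lam)%R -> 1 <= m -> i + o = n -> n <= s + i -> i <= t * a ->
  (INR s < 3 * lam * INR n)%R -> (3 * lam * INR m < / INR a)%R -> o * (m - 1) < t.
Proof.
  intros Hlam Hm Hio Hn Hi Hs Ha.
  assert (Ha1 : 1 <= a).
  { destruct a; [|lia]. simpl in Ha. rewrite Rinv_0 in Ha. pose proof (pos_INR m). nra. }
  apply Nat.nle_gt. intros Ht.
  assert (Hnat : n <= s * (m * a)).
  { assert (i <= s * (m - 1) * a).
    { apply (Nat.le_trans _ (t * a)); [auto|]. apply Nat.mul_le_mono_r. nia. }
    replace m with ((m - 1) + 1) by lia. nia. }
  apply le_INR in Hnat. rewrite !mult_INR in Hnat.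
  assert (HA : (1 <= INR a)%R) by (apply (le_INR 1); auto).
  assert (HM : (1 <= INR m)%R) by (apply (le_INR 1); auto).
  assert (Hma : (3 * lam * INR m * INR a < 1)%R).
  { apply (Rmult_lt_compat_r (INR a)) in Ha; [|lra]. rewrite Rinv_l in Ha; lra. }
  pose proof (pos_INR s). nra.
Qed.

Lemma thin_ge1 {X : complex2} {M : nat} (R : Fx X) : thin X M -> bd X R <> [] -> 1 <= M.
Proof.
  intros Hthin Hbd. destruct (nth_error (bd X R) 0) as [o|] eqn:Ho.
  2: { apply nth_error_None in Ho. destruct (bd X R); [contradiction|simpl in Ho; lia]. }
  destruct (Hthin (fst o)) as [L [_ [HL HLen]]].
  assert (Hin : In (R, 0) L) by (apply HL; exists o; auto).
  destruct L; [contradiction|simpl in HLen; lia].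
Qed.

Theorem lemma3p17 (X : complex2) (M : nat) (lam : R) (H : amap X -> Prop)
  (Y : scx X) (Rc : Fx X) (Q S : list (Ex X * bool)) :
  is_complex2 X -> thin X M -> (0 < lam)%R -> subgroup H ->
  is_subcomplex Y -> cocompact H Y -> missing_3shell Y Rc Q S ->
  (INR (length S) < 3 * lam * INR (blen Rc))%R ->
  (3 * lam * INR M < / INR (autH_card H Rc))%R ->
  per H (enlarge H Y Rc) < per H Y.
Proof.
  intros Hcx Hthin Hlam HG _ Hcc Hshell Hlen Haut.
  pose proof (thin_ge1 Rc Hthin (proj1 (Hcx Rc))) as HM.
  destruct (per_enlarge_bound HG Rc Hthin (proj1 Hcc) (proj1 Hshell) Hcc) as [t [Hper Hin]].
  pose proof (shell_length Hshell) as HQS.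
  pose proof (shell_outer_le Hshell) as HQin.
  pose proof (bd_positions_length Y Rc) as Hpos.
  assert (Hn : blen Rc <= length S + length (bd_positions_in Y Rc)) by lia.
  pose proof (perimeter_arith Hlam HM Hpos Hn Hin Hlen Haut). lia.
Qed.
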